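(* Let $V\subset\mathbb{R}^d$ be a finite antichain, $p\in S_V$, and $v\in D_p$ with $p_i=v_i$. Then $v$ is an $i$-witness for $p$ if and only if there is no minimum $w\in V$ such that $w_i<v_i=p_i$ and, for every $j\neq i$, either $w_j\le v_j$ or $w_j<p_j$.
   Context: For $x,y\in\mathbb{R}^d$, $x\le y$ (dominance order) means $x_i\le y_i$ for all $i$; $y\rhd x$ means $y_i>x_i$ for all $i$; $y\rhd_i x$ means $y_i=x_i$ and $y_j>x_j$ for all $j\neq i$. $V\subset\mathbb{R}^d$ is a finite antichain in the dominance order (elements are called minima). The orthogonal surface $S_V$ is the topological boundary of $\langle V\rangle=\{x: x\ge v\text{ for some }v\in V\}$; equivalently $p\in S_V$ iff there is $v\in V$ with $v\le p$ and no $w\in V$ with $p\rhd w$. For $p\in S_V$, $D_p=\{v\in V:v\le p\}$. For $p\in S_V$, a minimum $v\in D_p$ is an $i$-witness for $p$ if there is $q\in S_V$ with $v\le p\le q$ and $q\rhd_i v$. *)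

From mathcomp Require Import all_boot all_order all_algebra.
Set Implicit Arguments. Unset Strict Implicit. Unset Printing Implicit Defensive.
Import Order.TTheory GRing.Theory Num.Theory.
Local Open Scope ring_scope.

Section Ortho.
Variables (R : realFieldType) (d : nat).
Notation pt := 'rV[R]_d.

Definition dom_le (x y : pt) : Prop := forall i : 'I_d, x 0 i <= y 0 i.
Definition dom_gt (y x : pt) : Prop := forall i : 'I_d, x 0 i < y 0 i.
Definition dom_gt_at (i : 'I_d) (y x : pt) : Prop :=
  y 0 i = x 0 i /\ forall j : 'I_d, j != i -> x 0 j < y 0 j.

Definition antichain (V : seq pt) : Prop :=
  forall v w, v \in V -> w \in V -> dom_le v w -> v = w.

Definition on_surface (V : seq pt) (p : pt) : Prop :=
  (exists2 v, v \in V & dom_le v p) /\ ~ (exists2 w, w \in V & dom_gt p w).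

Definition Dp (V : seq pt) (p : pt) (v : pt) : Prop := v \in V /\ dom_le v p.

Definition witness (V : seq pt) (i : 'I_d) (p v : pt) : Prop :=
  Dp V p v /\ exists q : pt, on_surface V q /\ dom_le v p /\ dom_le p q /\ dom_gt_at i q v.

End Ortho.

From mathcomp Require Import all_boot all_order all_algebra.
Set Implicit Arguments. Unset Strict Implicit. Unset Printing Implicit Defensive.
Import Order.TTheory GRing.Theory Num.Theory.
Local Open Scope ring_scope.

(* A point q with p <= q and q |>_i v strictly dominates every w that blocks
   v at p, so no such q lies on S_V when a blocking minimum exists.
   Conversely, raise p by a small e > 0 in every coordinate j <> i where v is
   tight (v_j = p_j): this gives q |>_i v, and choosing e below every positive
   gap w_j - p_j (w in V) ensures that a minimum strictly below q would block v. *)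

Lemma exists_pos_lbound (R : realFieldType) (T : eqType) (s : seq T) (f : T -> R) :
  exists2 e : R, 0 < e & forall x, x \in s -> 0 < f x -> e <= f x.
Proof.
elim: s => [|x s [e e0 He]]; first by exists 1.
have [fx_gt0 | fx_le0] := ltP 0 (f x).
  exists (Num.min e (f x)); first by rewrite lt_min e0 fx_gt0.
  move=> y; rewrite inE => /orP [/eqP -> _ | ys fy_gt0].
    by rewrite ge_min lexx orbT.
  by rewrite ge_min He.
exists e => // y; rewrite inE => /orP [/eqP -> fx_gt0 | ys]; last exact: He.
by move: (lt_le_trans fx_gt0 fx_le0); rewrite ltxx.
Qed.

Section OrthogonalSurface.
Variables (R : realFieldType) (d : nat).
Notation pt := 'rV[R]_d.
Implicit Types (V : seq pt) (p q v w : pt) (i : 'I_d).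

Definition blocks i p v w : Prop :=
  w 0 i < v 0 i /\ forall j : 'I_d, j != i -> (w 0 j <= v 0 j \/ w 0 j < p 0 j).

Lemma dom_gt_blocks i p q v w :
  dom_le p q -> dom_gt_at i q v -> blocks i p v w -> dom_gt q w.
Proof.
move=> pq [qvi qvj] [wvi wj] j.
have [-> | ji] := eqVneq j i; first by rewrite qvi.
case: (wj j ji) => [wvj | wpj]; first exact: le_lt_trans wvj (qvj j ji).
exact: lt_le_trans wpj (pq j).
Qed.

Lemma exists_gap_lbound V p :
  exists2 e : R, 0 < e &
    forall w j, w \in V -> p 0 j < w 0 j -> e <= w 0 j - p 0 j.
Proof.
have [e e0 He] := exists_pos_lbound [seq (w, j) | w <- V, j <- enum 'I_d]
  (fun wj => wj.1 0 wj.2 - p 0 wj.2).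
exists e => // w j wV pwj; apply: (He (w, j)); last by rewrite subr_gt0.
by apply: allpairs_f; rewrite ?mem_enum.
Qed.

Definition raise_tight i p v (e : R) : pt :=
  \row_j (if j == i then p 0 i else if v 0 j < p 0 j then p 0 j else p 0 j + e).

Lemma raise_tightE i p v e j :
  raise_tight i p v e 0 j =
  if j == i then p 0 i else if v 0 j < p 0 j then p 0 j else p 0 j + e.
Proof. by rewrite mxE. Qed.

Lemma tight_eq p v j : dom_le v p -> ~~ (v 0 j < p 0 j) -> p 0 j = v 0 j.
Proof. by move=> vp; rewrite lt_neqAle vp andbT negbK => /eqP. Qed.

Lemma dom_le_raise_tight i p v e : 0 <= e -> dom_le p (raise_tight i p v e).
Proof.
move=> e_ge0 j; rewrite raise_tightE.
have [-> | _] := eqVneq j i; first by [].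
by case: ifP => _; rewrite ?lerDl.
Qed.

Lemma dom_gt_at_raise_tight i p v e :
  0 < e -> dom_le v p -> p 0 i = v 0 i -> dom_gt_at i (raise_tight i p v e) v.
Proof.
move=> e_gt0 vp pvi; split=> [|j ji]; first by rewrite raise_tightE eqxx.
rewrite raise_tightE (negbTE ji); case: ifPn => // vpj.
by rewrite (tight_eq vp vpj) ltrDl.
Qed.

Lemma raise_tight_on_surface V i p v e :
  0 < e -> (forall w j, w \in V -> p 0 j < w 0 j -> e <= w 0 j - p 0 j) ->
  v \in V -> dom_le v p -> p 0 i = v 0 i ->
  ~ (exists2 w, w \in V & blocks i p v w) ->
  on_surface V (raise_tight i p v e).
Proof.
move=> e_gt0 e_gap vV vp pvi noblock.
have pq := dom_le_raise_tight i p v (ltW e_gt0).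
split; first by exists v => // j; exact: le_trans (vp j) (pq j).
move=> [w wV qw]; apply: noblock; exists w => //; split.
  by move: (qw i); rewrite raise_tightE eqxx pvi.
move=> j ji; have [wvj | vwj] := leP (w 0 j) (v 0 j); first by left.
have [wpj | pwj] := ltP (w 0 j) (p 0 j); first by right.
move: (qw j); rewrite raise_tightE (negbTE ji).
case: ifPn => [vpj | /(tight_eq vp) pvj]; first by rewrite ltNge pwj.
have := e_gap w j wV; rewrite pvj => /(_ vwj).
by rewrite lerBrDl ltNge => ->.
Qed.

End OrthogonalSurface.

Theorem corollary4p4 (R : realFieldType) (d : nat) (V : seq 'rV[R]_d)
  (p v : 'rV[R]_d) (i : 'I_d) :
  antichain V -> on_surface V p -> Dp V p v -> p 0 i = v 0 i ->
  (witness V i p v <->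
   ~ (exists2 w, w \in V &
        w 0 i < v 0 i /\
        forall j : 'I_d, j != i -> (w 0 j <= v 0 j \/ w 0 j < p 0 j))).
Proof.
move=> _ _ [vV vp] pvi; split.
  move=> [_ [q [[_ nothing_below_q] [_ [pq qv]]]]] [w wV wblocks].
  by apply: nothing_below_q; exists w => //; exact: dom_gt_blocks qv wblocks.
move=> noblock; split=> //.
have [e e_gt0 e_gap] := exists_gap_lbound V p.
exists (raise_tight i p v e); split; first exact: raise_tight_on_surface.
split=> //; split; first by apply: dom_le_raise_tight; exact: ltW.
exact: dom_gt_at_raise_tight.
Qed.
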